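(* Let $U$ be a Hilbert space, $T: U\rightrightarrows U$, $(\hat u,\hat w)\in\operatorname{graph}T$, and $\Xi,N,M\in\mathcal{L}(U;U)$ with $M\ge\Xi\ge0$. If $(\Xi, M-\Xi)\in\mathcal{P}(T^{-1}(\hat w),\hat u)$, then $(N,\Xi)$-strong submonotonicity of $T$ at $(\hat u,\hat w)$ implies $(\Xi,N,M)$-partial strong submonotonicity of $T$ at $(\hat u,\hat w)$. If $T^{-1}(\hat w)=\{\hat u\}$ is a singleton, these two properties are equivalent (and $(\Xi,M-\Xi)\in\mathcal{P}(T^{-1}(\hat w),\hat u)$ holds).
   Context: For $T\in\mathcal{L}(U;U)$: $\langle x,z\rangle_T:=\langle Tx,z\rangle$, $\|x\|^2_T:=\langle Tx,x\rangle$, $\operatorname{dist}^2_T(z,A):=\inf_{u\in A}\|z-u\|^2_T$; $T\ge S$ means $T-S$ positive semidefinite. For $\Xi,N,M\in\mathcal{L}(U;U)$ with $M\ge0$, $T$ is $(\Xi,N,M)$-partially strongly submonotone at $(\hat u,\hat w)$ if there is a neighbourhood $\mathcal{U}\ni\hat u$ with $\inf_{u^*\in T^{-1}(\hat w)}(\langle w-\hat w,u-u^*\rangle_N + \|u-u^*\|^2_{M-\Xi}) \ge \operatorname{dist}^2_M(u,T^{-1}(\hat w))$ for all $u\in\mathcal{U}$, $w\in T(u)$. $T$ is $(N,M)$-strongly submonotone if it is $(M,N,M)$-partially strongly submonotone. For $M,M'\in\mathcal{L}(U;U)$, $A\subset U$ and $\hat u\in A$, one writes $(M,M')\in\mathcal{P}(A,\hat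 u)$ if there is a neighbourhood $\mathcal{U}'\ni\hat u$ such that each $u\in\mathcal{U}'$ has a common projection onto $A$ with respect to $\|\cdot\|_M$ and $\|\cdot\|_{M'}$, i.e. some $u^*\in A$ minimises both $\|u-\cdot\|_M$ and $\|u-\cdot\|_{M'}$ over $A$. *)

From HB Require Import structures.
From mathcomp Require Import all_boot all_order all_algebra.
From mathcomp Require Import all_classical all_reals all_analysis.
Set Implicit Arguments. Unset Strict Implicit. Unset Printing Implicit Defensive.
Import Order.TTheory GRing.Theory Num.Theory.
Import numFieldNormedType.Exports.
Local Open Scope classical_set_scope.
Local Open Scope ring_scope.

Definition hilbert_ip (R : realType) (U : completeNormedModType R)
  (ip : U -> U -> R) : Prop :=
  [/\ forall x y, ip x y = ip y x,
      forall a x y z, ip (a *: x + y) z = a * ip x z + ip y z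
    & forall x, ip x x = `|x| ^+ 2].

Definition bounded_linear (R : realType) (U : completeNormedModType R)
  (A : U -> U) : Prop :=
  (forall a x y, A (a *: x + y) = a *: A x + A y) /\ continuous A.

Definition op_sub (R : realType) (U : completeNormedModType R) (A B : U -> U)
  : U -> U := fun x => A x - B x.

Definition ipT (R : realType) (U : completeNormedModType R) (ip : U -> U -> R)
  (T : U -> U) (x z : U) : R := ip (T x) z.
Definition sqnormT (R : realType) (U : completeNormedModType R)
  (ip : U -> U -> R) (T : U -> U) (x : U) : R := ip (T x) x.
Definition normT (R : realType) (U : completeNormedModType R)
  (ip : U -> U -> R) (T : U -> U) (x : U) : R := Num.sqrt (sqnormT ip T x).

Definition op_ge (R : realType) (U : completeNormedModType R)
  (ip : U -> U -> R) (T S : U -> U) : Prop :=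
  forall x, 0 <= sqnormT ip (op_sub T S) x.

Definition dist2T (R : realType) (U : completeNormedModType R)
  (ip : U -> U -> R) (T : U -> U) (z : U) (A : set U) : \bar R :=
  ereal_inf [set (sqnormT ip T (z - u))%:E | u in A].

Definition inv_img (R : realType) (U : completeNormedModType R)
  (T : U -> set U) (w : U) : set U := [set u | T u w].

Definition partially_strongly_submonotone (R : realType)
  (U : completeNormedModType R) (ip : U -> U -> R)
  (Xi N M : U -> U) (T : U -> set U) (hu hw : U) : Prop :=
  \forall u \near hu, forall w, T u w ->
    (ereal_inf [set (ipT ip N (w - hw) (u - us)
                     + sqnormT ip (op_sub M Xi) (u - us))%:E
               | us in inv_img T hw]
     >= dist2T ip M u (inv_img T hw))%E.

Definition strongly_submonotone (R : realType)
  (U : completeNormedModType R) (ip : U -> U -> R)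
  (N M : U -> U) (T : U -> set U) (hu hw : U) : Prop :=
  partially_strongly_submonotone ip M N M T hu hw.

Definition common_proj (R : realType) (U : completeNormedModType R)
  (ip : U -> U -> R) (M M' : U -> U) (A : set U) (hu : U) : Prop :=
  \forall u \near hu, exists2 us, A us &
    (forall v, A v -> normT ip M (u - us) <= normT ip M (u - v)) /\
    (forall v, A v -> normT ip M' (u - us) <= normT ip M' (u - v)).

From HB Require Import structures.
From mathcomp Require Import all_boot all_order all_algebra.
From mathcomp Require Import all_classical all_reals all_analysis.
Import Order.TTheory GRing.Theory Num.Theory.
Import numFieldNormedType.Exports.
Set Implicit Arguments. Unset Strict Implicit. Unset Printing Implicit Defensive.
Local Open Scope classical_set_scope.
Local Open Scope ring_scope.

(* Let A = T^-1(hw) and let us be a common projection of u onto A.  Splitting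
   ||u - us||^2_M = ||u - us||^2_Xi + ||u - us||^2_(M-Xi) bounds dist^2_M(u, A)
   by dist^2_Xi(u, A) + ||u - v||^2_(M-Xi) for every v in A.  Since
   (N, Xi)-strong submonotonicity is (Xi, N, Xi)-partial strong
   submonotonicity, its quadratic term vanishes and it bounds dist^2_Xi(u, A)
   by <w - hw, u - v>_N for every v in A; adding the two bounds gives the claim.
   When A = {hu} both infima are attained at hu and the two inequalities
   differ by the same term ||u - hu||^2_(M-Xi) on each side. *)

Section InnerProductSeminorms.
Variables (R : realType) (U : completeNormedModType R) (ip : U -> U -> R).
Hypothesis ip_hilbert : hilbert_ip ip.

Lemma ipBl a b z : ip (a - b) z = ip a z - ip b z.
Proof.
case: ip_hilbert => _ ip_linear _.
by have := ip_linear (-1) b a z; rewrite scaleN1r mulN1r addrC [RHS]addrC.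
Qed.

Lemma sqnormTB (A B : U -> U) x :
  sqnormT ip (op_sub A B) x = sqnormT ip A x - sqnormT ip B x.
Proof. exact: ipBl. Qed.

Lemma sqnormT_subxx (A : U -> U) x : sqnormT ip (op_sub A A) x = 0.
Proof. by rewrite sqnormTB subrr. Qed.

Lemma sqnormT_split (M Xi : U -> U) x :
  sqnormT ip M x = sqnormT ip Xi x + sqnormT ip (op_sub M Xi) x.
Proof. by rewrite sqnormTB addrC subrK. Qed.

Lemma op_ge_sub0 (A B : U -> U) :
  op_ge ip A B -> op_ge ip (op_sub A B) (fun=> 0).
Proof. by move=> AgeB x; rewrite /sqnormT /op_sub subr0; exact: AgeB. Qed.

Lemma sqnormT_le (P : U -> U) a b :
  op_ge ip P (fun=> 0) -> normT ip P a <= normT ip P b ->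
  sqnormT ip P a <= sqnormT ip P b.
Proof.
move=> Pge0; rewrite /normT ler_sqrt //.
by have := Pge0 b; rewrite /sqnormT /op_sub subr0.
Qed.

Lemma dist2T_le_sqnormT (P : U -> U) (A : set U) z us :
  A us -> (dist2T ip P z A <= (sqnormT ip P (z - us))%:E)%E.
Proof. by move=> Aus; apply: ereal_inf_lbound; exists us. Qed.

Lemma dist2T_proj (P : U -> U) (A : set U) z us :
  op_ge ip P (fun=> 0) -> A us ->
  (forall v, A v -> normT ip P (z - us) <= normT ip P (z - v)) ->
  dist2T ip P z A = (sqnormT ip P (z - us))%:E.
Proof.
move=> Pge0 Aus proj; apply/le_anti; rewrite dist2T_le_sqnormT //=.
by apply/ereal_infP => _ [v Av <-]; rewrite lee_fin sqnormT_le // proj.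
Qed.

Lemma common_proj_set1 (P Q : U -> U) hu : common_proj ip P Q [set hu] hu.
Proof. by apply: nearW => u; exists hu => //; split=> v ->. Qed.

End InnerProductSeminorms.

Section Submonotonicity.
Variables (R : realType) (U : completeNormedModType R) (ip : U -> U -> R).
Hypothesis ip_hilbert : hilbert_ip ip.
Variables (T : U -> set U) (hu hw : U) (Xi N M : U -> U).

Lemma partially_strongly_submonotone_of_common_proj :
  op_ge ip M Xi -> op_ge ip Xi (fun=> 0) ->
  common_proj ip Xi (op_sub M Xi) (inv_img T hw) hu ->
  strongly_submonotone ip N Xi T hu hw ->
  partially_strongly_submonotone ip Xi N M T hu hw.
Proof.
move=> MgeXi Xige0 cproj ssub.
have MXige0 := op_ge_sub0 MgeXi.
apply: filterS2 cproj ssub => u [us Aus [projXi projMXi]] ssub_u w Tuw.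
have distXi_le v : inv_img T hw v ->
    sqnormT ip Xi (u - us) <= ipT ip N (w - hw) (u - v).
  move=> Av; rewrite -lee_fin -(dist2T_proj Xige0 Aus projXi).
  apply: le_trans (ssub_u w Tuw) _; apply: ereal_inf_lbound; exists v => //.
  by rewrite sqnormT_subxx // addr0.
apply/ereal_infP => _ [v Av <-].
apply: le_trans (dist2T_le_sqnormT ip M u Aus) _.
rewrite (sqnormT_split ip_hilbert M Xi) lee_fin lerD ?distXi_le //.
exact: sqnormT_le (projMXi v Av).
Qed.

Lemma strongly_submonotone_iff_partially_set1 :
  inv_img T hw = [set hu] ->
  strongly_submonotone ip N Xi T hu hw <->
  partially_strongly_submonotone ip Xi N M T hu hw.
Proof.
rewrite /strongly_submonotone /partially_strongly_submonotone /dist2T => ->.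
split; apply: filterS => u ssub_u w Tuw; have := ssub_u w Tuw;
  rewrite !image_set1 !ereal_inf1 !lee_fin (sqnormT_split ip_hilbert M Xi);
  by rewrite sqnormT_subxx // addr0 lerD2r.
Qed.

End Submonotonicity.

Theorem proposition4p3 (R : realType) (U : completeNormedModType R)
  (ip : U -> U -> R) (T : U -> set U) (hu hw : U) (Xi N M : U -> U) :
  hilbert_ip ip ->
  T hu hw ->
  bounded_linear Xi -> bounded_linear N -> bounded_linear M ->
  op_ge ip M Xi -> op_ge ip Xi (fun=> 0) ->
  (common_proj ip Xi (op_sub M Xi) (inv_img T hw) hu ->
     strongly_submonotone ip N Xi T hu hw ->
     partially_strongly_submonotone ip Xi N M T hu hw) /\
  (inv_img T hw = [set hu] ->
     (strongly_submonotone ip N Xi T hu hw <->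
        partially_strongly_submonotone ip Xi N M T hu hw) /\
     common_proj ip Xi (op_sub M Xi) (inv_img T hw) hu).
Proof.
move=> ip_hilbert _ _ _ _ MgeXi Xige0; split.
  exact: partially_strongly_submonotone_of_common_proj.
move=> Aset1; split; first exact: strongly_submonotone_iff_partially_set1.
by rewrite Aset1; apply: common_proj_set1.
Qed.
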